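(* Let QS4 be the modal predicate calculus obtained from classical predicate calculus by adding a unary connective $\Box$ with axiom schemes $\Box p\to p$, $\Box p\to\Box\Box p$, $\Box(p\to q)\to(\Box p\to\Box q)$ and the rule $p\,/\,\Box p$. Define a translation $A\mapsto A_\Box$ from formulas of QHC to formulas of QS4 by recursion: atomic propositions are unchanged, and $0_\Box=0$; $\bot_\Box=0$; each atomic problem $\pi(t_1,\dots,t_n)\neq\bot$ is sent to $\Box\bar\pi(t_1,\dots,t_n)$, where $\bar\pi$ is a proposition variable of the same arity assigned injectively to $\pi$ (and distinct from the proposition variables of QHC); classical connectives and quantifiers are kept; intuitionistic $\land,\lor,\exists$ become the classical ones ($(\alpha\land\beta)_\Box=\alpha_\Box\land\beta_\Box$, etc.); intuitionistic $\to$ and $\forall$ become classical and prefixed by $\Box$: $(\alpha\to\beta)_\Box=\Box(\alpha_\Box\to\beta_\Box)$, $(\forall x\,\alpha)_\Box=\Box\forall x\,\alpha_\Box$; $(?\alpha)_\Box=\alpha_\Box$; $(!p)_\Box=\Box p_\Box$. Then if $A_1,\dots,A_n\vdash_{\mathrm{QHC}} A$, we have $(A_1)_\Box,\dots,(A_n)_\Box\vdash_{\mathrm{QS4}} A_\Box$.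
   Context: QHC is a two-sorted first-order calculus. Its only terms are individual variables. Every formula is either a problem (denoted by Greek letters $\alpha,\beta,\gamma,\dots$) or a proposition (denoted by Latin letters $p,q,\dots$). Atomic formulas are proposition variables $p(t_1,\dots,t_n)$ (of proposition type), problem variables $\pi(t_1,\dots,t_n)$ (of problem type), and the constants $0$ (a proposition, classical falsity) and $\bot$ (a problem, intuitionistic absurdity). Propositions are closed under the classical connectives $\land,\lor,\to$ and quantifiers $\exists,\forall$; problems are closed under the intuitionistic connectives $\land,\lor,\to$ and quantifiers $\exists,\forall$ (the same symbols are used, distinguished by the type of the arguments). $\neg p$ abbreviates $p\to 0$, $\neg\alpha$ abbreviates $\alpha\to\bot$, and $\leftrightarrow$ is defined as usual. There are two type-conversion operators: if $p$ is a proposition then $!p$ is a problem, and if $\alpha$ is a problem then $?\alpha$ is a proposition. Deductive system of QHC: all axioms and rules of classical predicate logic applied to all propositions; all postulates and rules of intuitionistic predicate logic applied to all problems; the rules $p\,/\,!p$ and $\alpha\,/\,?\alpha$; and the schemas $?!p\to p$; $\alpha\to\, !?\alpha$; $!(p\to q)\to(!p\to !q)$; $?(\alpha\to\beta)\to(?\alpha\to ?\beta)$; $!0\to\bot$; $?(\alpha\land\beta)\leftrightarrow ?\alpha\land ?\beta$; $?(\alpha\lor\beta)\leftrightarrow ?\alpha\lor ?\beta$; $?\bot\to 0$; $?\exists x\,\alpha(x)\leftrightarrow\exists x\,?\alpha(x)$; $?\forall x\,\alpha(x)\to\forall x\,?\alpha(x)$ (usual variable side conditions implicit). $\vdash A$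 means $A$ is derivable in QHC; $A\Rightarrow B$ means $\vdash A\to B$ and $A\Leftrightarrow B$ means $\vdash A\leftrightarrow B$ (with $A,B$ of the same type); $A\vdash B$ means $B$ is derivable in QHC from the premise $A$. Notation: $\Box p := ?!p$ (a proposition) and $\nabla\alpha := !?\alpha$ (a problem). QC and QH denote classical and intuitionistic predicate calculus. *)

From Stdlib Require Import List.
Import ListNotations.

(* Individual variables are de Bruijn indices (nat); the only terms are variables.
   Atomic formulas: variable name (nat) applied to a list of argument variables. *)

Inductive prop : Type :=
| PVar  : nat -> list nat -> prop
| PFalse : prop
| PAnd  : prop -> prop -> prop
| POr   : prop -> prop -> prop
| PImp  : prop -> prop -> prop
| PEx   : prop -> prop                 (* binds de Bruijn index 0 *)
| PAll  : prop -> prop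
| PQue  : prob -> prop
with prob : Type :=
| QVar  : nat -> list nat -> prob
| QBot  : prob
| QAnd  : prob -> prob -> prob
| QOr   : prob -> prob -> prob
| QImp  : prob -> prob -> prob
| QEx   : prob -> prob
| QAll  : prob -> prob
| QBang : prop -> prob.

Inductive qform : Type :=
| Fp : prop -> qform
| Fq : prob -> qform.

Definition up (f : nat -> nat) : nat -> nat :=
  fun n => match n with 0 => 0 | S k => S (f k) end.

Fixpoint renP (f : nat -> nat) (p : prop) : prop :=
  match p with
  | PVar n ts => PVar n (map f ts)
  | PFalse => PFalse
  | PAnd a b => PAnd (renP f a) (renP f b)
  | POr a b => POr (renP f a) (renP f b)
  | PImp a b => PImp (renP f a) (renP f b)
  | PEx a => PEx (renP (up f) a)
  | PAll a => PAll (renP (up f) a)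
  | PQue a => PQue (renQ f a)
  end
with renQ (f : nat -> nat) (a : prob) : prob :=
  match a with
  | QVar n ts => QVar n (map f ts)
  | QBot => QBot
  | QAnd a b => QAnd (renQ f a) (renQ f b)
  | QOr a b => QOr (renQ f a) (renQ f b)
  | QImp a b => QImp (renQ f a) (renQ f b)
  | QEx a => QEx (renQ (up f) a)
  | QAll a => QAll (renQ (up f) a)
  | QBang p => QBang (renP f p)
  end.

Definition inst (y : nat) : nat -> nat :=
  fun n => match n with 0 => y | S k => k end.

Definition substP (y : nat) (p : prop) : prop := renP (inst y) p.
Definition substQ (y : nat) (a : prob) : prob := renQ (inst y) a.
(* weakening: the formula does not contain the newly bound variable 0 *)
Definition liftP (p : prop) : prop := renP S p.
Definition liftQ (a : prob) : prob := renQ S a.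

Definition PIff (p q : prop) : prop := PAnd (PImp p q) (PImp q p).

Inductive QHC (G : list qform) : qform -> Prop :=
| qhc_hyp A : In A G -> QHC G A
| cl_K p q : QHC G (Fp (PImp p (PImp q p)))
| cl_S p q r : QHC G (Fp (PImp (PImp p (PImp q r)) (PImp (PImp p q) (PImp p r))))
| cl_andE1 p q : QHC G (Fp (PImp (PAnd p q) p))
| cl_andE2 p q : QHC G (Fp (PImp (PAnd p q) q))
| cl_andI p q : QHC G (Fp (PImp p (PImp q (PAnd p q))))
| cl_orI1 p q : QHC G (Fp (PImp p (POr p q)))
| cl_orI2 p q : QHC G (Fp (PImp q (POr p q)))
| cl_orE p q r : QHC G (Fp (PImp (PImp p r) (PImp (PImp q r) (PImp (POr p q) r))))
| cl_efq p : QHC G (Fp (PImp PFalse p))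
| cl_dne p : QHC G (Fp (PImp (PImp (PImp p PFalse) PFalse) p))
| cl_allE p y : QHC G (Fp (PImp (PAll p) (substP y p)))
| cl_exI p y : QHC G (Fp (PImp (substP y p) (PEx p)))
| cl_allI p q : QHC G (Fp (PImp (PAll (PImp (liftP q) p)) (PImp q (PAll p))))
| cl_exE p q : QHC G (Fp (PImp (PAll (PImp p (liftP q))) (PImp (PEx p) q)))
| cl_mp p q : QHC G (Fp (PImp p q)) -> QHC G (Fp p) -> QHC G (Fp q)
| cl_gen p : QHC G (Fp p) -> QHC G (Fp (PAll p))
| in_K a b : QHC G (Fq (QImp a (QImp b a)))
| in_S a b c : QHC G (Fq (QImp (QImp a (QImp b c)) (QImp (QImp a b) (QImp a c))))
| in_andE1 a b : QHC G (Fq (QImp (QAnd a b) a))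
| in_andE2 a b : QHC G (Fq (QImp (QAnd a b) b))
| in_andI a b : QHC G (Fq (QImp a (QImp b (QAnd a b))))
| in_orI1 a b : QHC G (Fq (QImp a (QOr a b)))
| in_orI2 a b : QHC G (Fq (QImp b (QOr a b)))
| in_orE a b c : QHC G (Fq (QImp (QImp a c) (QImp (QImp b c) (QImp (QOr a b) c))))
| in_efq a : QHC G (Fq (QImp QBot a))
| in_allE a y : QHC G (Fq (QImp (QAll a) (substQ y a)))
| in_exI a y : QHC G (Fq (QImp (substQ y a) (QEx a)))
| in_allI a b : QHC G (Fq (QImp (QAll (QImp (liftQ b) a)) (QImp b (QAll a))))
| in_exE a b : QHC G (Fq (QImp (QAll (QImp a (liftQ b))) (QImp (QEx a) b)))
| in_mp a b : QHC G (Fq (QImp a b)) -> QHC G (Fq a) -> QHC G (Fq b)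
| in_gen a : QHC G (Fq a) -> QHC G (Fq (QAll a))
| r_bang p : QHC G (Fp p) -> QHC G (Fq (QBang p))
| r_que a : QHC G (Fq a) -> QHC G (Fp (PQue a))
| x_quebang p : QHC G (Fp (PImp (PQue (QBang p)) p))
| x_bangque a : QHC G (Fq (QImp a (QBang (PQue a))))
| x_bangK p q : QHC G (Fq (QImp (QBang (PImp p q)) (QImp (QBang p) (QBang q))))
| x_queK a b : QHC G (Fp (PImp (PQue (QImp a b)) (PImp (PQue a) (PQue b))))
| x_bang0 : QHC G (Fq (QImp (QBang PFalse) QBot))
| x_queAnd a b : QHC G (Fp (PIff (PQue (QAnd a b)) (PAnd (PQue a) (PQue b))))
| x_queOr a b : QHC G (Fp (PIff (PQue (QOr a b)) (POr (PQue a) (PQue b))))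
| x_queBot : QHC G (Fp (PImp (PQue QBot) PFalse))
| x_queEx a : QHC G (Fp (PIff (PQue (QEx a)) (PEx (PQue a))))
| x_queAll a : QHC G (Fp (PImp (PQue (QAll a)) (PAll (PQue a)))).

Inductive mform : Type :=
| MVar : nat -> list nat -> mform
| MFalse : mform
| MAnd : mform -> mform -> mform
| MOr : mform -> mform -> mform
| MImp : mform -> mform -> mform
| MEx : mform -> mform
| MAll : mform -> mform
| MBox : mform -> mform.

Fixpoint renM (f : nat -> nat) (m : mform) : mform :=
  match m with
  | MVar n ts => MVar n (map f ts)
  | MFalse => MFalse
  | MAnd a b => MAnd (renM f a) (renM f b)
  | MOr a b => MOr (renM f a) (renM f b)
  | MImp a b => MImp (renM f a) (renM f b)
  | MEx a => MEx (renM (up f) a)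
  | MAll a => MAll (renM (up f) a)
  | MBox a => MBox (renM f a)
  end.

Definition substM (y : nat) (m : mform) : mform := renM (inst y) m.
Definition liftM (m : mform) : mform := renM S m.

Inductive QS4 (G : list mform) : mform -> Prop :=
| s4_hyp A : In A G -> QS4 G A
| s4_K p q : QS4 G (MImp p (MImp q p))
| s4_S p q r : QS4 G (MImp (MImp p (MImp q r)) (MImp (MImp p q) (MImp p r)))
| s4_andE1 p q : QS4 G (MImp (MAnd p q) p)
| s4_andE2 p q : QS4 G (MImp (MAnd p q) q)
| s4_andI p q : QS4 G (MImp p (MImp q (MAnd p q)))
| s4_orI1 p q : QS4 G (MImp p (MOr p q))
| s4_orI2 p q : QS4 G (MImp q (MOr p q))
| s4_orE p q r : QS4 G (MImp (MImp p r) (MImp (MImp q r) (MImp (MOr p q) r)))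
| s4_efq p : QS4 G (MImp MFalse p)
| s4_dne p : QS4 G (MImp (MImp (MImp p MFalse) MFalse) p)
| s4_allE p y : QS4 G (MImp (MAll p) (substM y p))
| s4_exI p y : QS4 G (MImp (substM y p) (MEx p))
| s4_allI p q : QS4 G (MImp (MAll (MImp (liftM q) p)) (MImp q (MAll p)))
| s4_exE p q : QS4 G (MImp (MAll (MImp p (liftM q))) (MImp (MEx p) q))
| s4_mp p q : QS4 G (MImp p q) -> QS4 G p -> QS4 G q
| s4_gen p : QS4 G p -> QS4 G (MAll p)
| s4_T p : QS4 G (MImp (MBox p) p)
| s4_4 p : QS4 G (MImp (MBox p) (MBox (MBox p)))
| s4_Kbox p q : QS4 G (MImp (MBox (MImp p q)) (MImp (MBox p) (MBox q)))
| s4_nec p : QS4 G p -> QS4 G (MBox p).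

(* ---------- The translation A |-> A_Box ----------
   proposition variable p_n  |-> proposition variable number 2n
   problem variable pi_n     |-> Box (proposition variable number 2n+1)
   (injective, and the images of problem variables are distinct from those of
   proposition variables). *)
Fixpoint trP (p : prop) : mform :=
  match p with
  | PVar n ts => MVar (2 * n) ts
  | PFalse => MFalse
  | PAnd a b => MAnd (trP a) (trP b)
  | POr a b => MOr (trP a) (trP b)
  | PImp a b => MImp (trP a) (trP b)
  | PEx a => MEx (trP a)
  | PAll a => MAll (trP a)
  | PQue a => trQ a
  end
with trQ (a : prob) : mform :=
  match a with
  | QVar n ts => MBox (MVar (S (2 * n)) ts)
  | QBot => MFalse
  | QAnd a b => MAnd (trQ a) (trQ b)
  | QOr a b => MOr (trQ a) (trQ b)
  | QImp a b => MBox (MImp (trQ a) (trQ b))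
  | QEx a => MEx (trQ a)
  | QAll a => MBox (MAll (trQ a))
  | QBang p => MBox (trP p)
  end.

Definition tr (A : qform) : mform :=
  match A with Fp p => trP p | Fq a => trQ a end.

(* The proof is by induction on the QHC derivation of A from Gamma.
   - The translation commutes with renamings of individual variables, hence
     with substitution and lifting, so every classical axiom of QHC is sent to
     an instance of the same classical axiom of QS4.
   - Translated problems are stable: alpha_Box -> Box alpha_Box is a theorem
     of QS4, since atoms, implications, universal quantifications and !p are
     sent to boxed formulas, and stability is preserved by conjunction,
     disjunction and the existential quantifier.
   - Using stability, T, 4 and K, every intuitionistic and mixed axiom scheme
     is sent to a theorem of QS4.
   - Modus ponens on problems becomes modus ponens under T; generalization on
     problems and the rule p / !p become generalization and necessitation. *)

From Stdlib Require Import List.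
Import ListNotations.

Scheme prop_mut_ind := Induction for prop Sort Prop
with prob_mut_ind := Induction for prob Sort Prop.
Combined Scheme syntax_mut_ind from prop_mut_ind, prob_mut_ind.

Lemma tr_ren :
  (forall p f, trP (renP f p) = renM f (trP p)) /\
  (forall a f, trQ (renQ f a) = renM f (trQ a)).
Proof. apply syntax_mut_ind; intros; simpl; congruence. Qed.

Lemma trP_subst y p : trP (substP y p) = substM y (trP p).
Proof. apply tr_ren. Qed.

Lemma trQ_subst y a : trQ (substQ y a) = substM y (trQ a).
Proof. apply tr_ren. Qed.

Lemma trP_lift p : trP (liftP p) = liftM (trP p).
Proof. apply tr_ren. Qed.

Lemma trQ_lift a : trQ (liftQ a) = liftM (trQ a).
Proof. apply tr_ren. Qed.

Lemma renM_cancel m : forall f g, (forall n, g (f n) = n) -> renM g (renM f m) = m.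
Proof.
  induction m; intros f g Hgf; simpl; f_equal; auto.
  - rewrite map_map, (map_ext _ (fun x => x)) by auto. apply map_id.
  - apply IHm. intros [|n]; simpl; congruence.
  - apply IHm. intros [|n]; simpl; congruence.
Qed.

(* A formula lifted under a binder, with the bound index instantiated by 0,
   is the original formula: this eliminates a quantifier over a fresh variable. *)
Lemma substM_0_lift_under_binder m : substM 0 (renM (up S) m) = m.
Proof. apply renM_cancel. intros [|n]; reflexivity. Qed.

Definition Thm (X : mform) : Prop := forall G, QS4 G X.

Inductive Der (H : list mform) : mform -> Prop :=
| der_hyp X : In X H -> Der H X
| der_thm X : Thm X -> Der H X
| der_mp X Y : Der H (MImp X Y) -> Der H X -> Der H Y.

Lemma thm_imp_refl X : Thm (MImp X X).
Proof.
  intro G. eapply s4_mp; [eapply s4_mp|].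
  - apply (s4_S G X (MImp X X) X).
  - apply s4_K.
  - apply s4_K.
Qed.

Lemma der_deduction h H X : Der (h :: H) X -> Der H (MImp h X).
Proof.
  induction 1 as [X [<- | HX] | X HX | X Y _ IHXY _ IHX].
  - apply der_thm, thm_imp_refl.
  - eapply der_mp; [apply der_thm; intro; apply s4_K | now apply der_hyp].
  - eapply der_mp; [apply der_thm; intro; apply s4_K | now apply der_thm].
  - eapply der_mp; [eapply der_mp|]; [apply der_thm; intro; apply s4_S | eauto | eauto].
Qed.

Lemma der_nil_thm X : Der [] X -> Thm X.
Proof.
  induction 1 as [X [] | X HX | X Y _ IHXY _ IHX]; auto.
  intro G. eapply s4_mp; eauto.
Qed.

Lemma thm_of_der1 A B : Der [A] B -> Thm (MImp A B).
Proof. intro; apply der_nil_thm, der_deduction; assumption. Qed.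

Lemma thm_of_der2 A B C : Der [B; A] C -> Thm (MImp A (MImp B C)).
Proof. intro; apply der_nil_thm, der_deduction, der_deduction; assumption. Qed.

Lemma thm_of_der3 A B C D : Der [C; B; A] D -> Thm (MImp A (MImp B (MImp C D))).
Proof. intro; apply der_nil_thm, der_deduction, der_deduction, der_deduction; assumption. Qed.

Lemma der_app1 H X Y : Thm (MImp X Y) -> Der H X -> Der H Y.
Proof. intros; eapply der_mp; [apply der_thm|]; eauto. Qed.

Lemma der_app2 H X Y Z : Thm (MImp X (MImp Y Z)) -> Der H X -> Der H Y -> Der H Z.
Proof. intros; eapply der_mp; [eapply der_app1|]; eauto. Qed.

Ltac der_assumption := apply der_hyp; simpl; tauto.

(* Box is monotone along theorems (necessitation followed by K). *)
Lemma der_box_mono H X Y : Thm (MImp X Y) -> Der H (MBox X) -> Der H (MBox Y).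
Proof.
  intros HXY. apply der_app1.
  intro G. eapply s4_mp; [apply s4_Kbox | apply s4_nec, HXY].
Qed.

Lemma der_box_mono2 H X Y Z :
  Thm (MImp X (MImp Y Z)) -> Der H (MBox X) -> Der H (MBox Y) -> Der H (MBox Z).
Proof.
  intros HXYZ HX HY. eapply der_app2; [intro; apply s4_Kbox | | exact HY].
  eapply der_box_mono; eauto.
Qed.

Lemma der_box_elim H X : Der H (MBox X) -> Der H X.
Proof. apply der_app1. intro; apply s4_T. Qed.

(* Boxed hypotheses may be kept under a box, thanks to axiom 4. *)
Lemma thm_box_intro P Q : Thm (MImp (MBox P) Q) -> Thm (MImp (MBox P) (MBox Q)).
Proof.
  intro HPQ. apply thm_of_der1. eapply der_box_mono; [exact HPQ|].
  eapply der_app1; [intro; apply s4_4 | der_assumption].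
Qed.

(* Modus ponens under T: the rule QHC uses for problems. *)
Lemma s4_box_mp G X Y : QS4 G (MBox (MImp X Y)) -> QS4 G X -> QS4 G Y.
Proof. intros HXY HX. eapply s4_mp; [eapply s4_mp; [apply s4_T|]|]; eauto. Qed.

Lemma thm_all_imp_dist X Y : Thm (MImp (MAll (MImp X Y)) (MImp (MAll X) (MAll Y))).
Proof.
  set (Q := MAnd (MAll (MImp X Y)) (MAll X)).
  (* instantiating the lifted universal premises at the fresh variable *)
  assert (HQ : Thm (MAll (MImp (liftM Q) Y))).
  { intro G. apply s4_gen. revert G. apply thm_of_der1. simpl.
    assert (HXY : Der [liftM Q] (MImp X Y)).
    { rewrite <- (substM_0_lift_under_binder (MImp X Y)).
      eapply der_app1; [intro; apply s4_allE|].
      eapply der_app1; [intro; apply s4_andE1 | der_assumption]. }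
    assert (HX : Der [liftM Q] X).
    { rewrite <- (substM_0_lift_under_binder X).
      eapply der_app1; [intro; apply s4_allE|].
      eapply der_app1; [intro; apply s4_andE2 | der_assumption]. }
    eapply der_mp; eauto. }
  apply thm_of_der2. eapply der_app2; [intro; apply s4_allI | apply der_thm, HQ |].
  eapply der_app2; [intro; apply s4_andI | der_assumption | der_assumption].
Qed.

Lemma der_all_box_elim H X : Der H (MAll (MBox X)) -> Der H (MAll X).
Proof.
  apply der_app2 with (X := MAll (MImp (MBox X) X)); [apply thm_all_imp_dist|].
  apply der_thm. intro G. apply s4_gen, s4_T.
Qed.

(* alpha_Box -> Box alpha_Box: boxed cases follow from axiom 4, and stability
   is preserved by conjunction, disjunction and the existential quantifier. *)
Lemma trQ_stable a : Thm (MImp (trQ a) (MBox (trQ a))).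
Proof.
  induction a as [n ts | | a IHa b IHb | a IHa b IHb | a _ b _ | a IHa | a _ | p];
    simpl; try (intro; apply s4_4).
  - intro; apply s4_efq.
  - apply thm_of_der1. eapply der_box_mono2; [intro; apply s4_andI | |].
    + eapply der_app1; [exact IHa|].
      eapply der_app1; [intro; apply s4_andE1 | der_assumption].
    + eapply der_app1; [exact IHb|].
      eapply der_app1; [intro; apply s4_andE2 | der_assumption].
  - apply der_nil_thm. eapply der_app2; [intro; apply s4_orE | |].
    + apply der_deduction. eapply der_box_mono; [intro; apply s4_orI1|].
      eapply der_app1; [exact IHa | der_assumption].
    + apply der_deduction. eapply der_box_mono; [intro; apply s4_orI2|].
      eapply der_app1; [exact IHb | der_assumption].
  - apply der_nil_thm. eapply der_app1; [intro; apply s4_exE|].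
    apply der_thm. intro G. apply s4_gen. revert G.
    apply thm_of_der1. simpl.
    eapply der_box_mono; [| eapply der_app1; [exact IHa | der_assumption]].
    rewrite <- (substM_0_lift_under_binder (trQ a)) at 1. intro; apply s4_exI.
Qed.

(* Each translated intuitionistic axiom is a boxed implication whose inner
   implication is a theorem; necessitation then applies. *)
Lemma tr_in_K a b : Thm (tr (Fq (QImp a (QImp b a)))).
Proof.
  intro G; apply s4_nec; revert G. apply thm_of_der1.
  eapply der_box_mono; [intro; apply s4_K|].
  eapply der_app1; [apply trQ_stable | der_assumption].
Qed.

Lemma tr_in_S a b c :
  Thm (tr (Fq (QImp (QImp a (QImp b c)) (QImp (QImp a b) (QImp a c))))).
Proof.
  intro G; apply s4_nec; revert G. simpl. apply thm_box_intro, thm_of_der2.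
  apply der_box_mono2 with (X := MImp (trQ a) (MBox (MImp (trQ b) (trQ c))))
                           (Y := MImp (trQ a) (trQ b));
    [apply thm_of_der3 | der_assumption | der_assumption].
  apply der_mp with (trQ b).
  - apply der_box_elim. apply der_mp with (trQ a); der_assumption.
  - apply der_mp with (trQ a); der_assumption.
Qed.

Lemma tr_in_andE1 a b : Thm (tr (Fq (QImp (QAnd a b) a))).
Proof. intro; apply s4_nec, s4_andE1. Qed.

Lemma tr_in_andE2 a b : Thm (tr (Fq (QImp (QAnd a b) b))).
Proof. intro; apply s4_nec, s4_andE2. Qed.

Lemma tr_in_andI a b : Thm (tr (Fq (QImp a (QImp b (QAnd a b))))).
Proof.
  intro G; apply s4_nec; revert G. apply thm_of_der1.
  eapply der_box_mono; [intro; apply s4_andI|].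
  eapply der_app1; [apply trQ_stable | der_assumption].
Qed.

Lemma tr_in_orI1 a b : Thm (tr (Fq (QImp a (QOr a b)))).
Proof. intro; apply s4_nec, s4_orI1. Qed.

Lemma tr_in_orI2 a b : Thm (tr (Fq (QImp b (QOr a b)))).
Proof. intro; apply s4_nec, s4_orI2. Qed.

Lemma tr_in_orE a b c :
  Thm (tr (Fq (QImp (QImp a c) (QImp (QImp b c) (QImp (QOr a b) c))))).
Proof.
  intro G; apply s4_nec; revert G. apply thm_box_intro, thm_of_der2.
  eapply der_box_mono2; [intro; apply s4_orE | der_assumption | der_assumption].
Qed.

Lemma tr_in_efq a : Thm (tr (Fq (QImp QBot a))).
Proof. intro; apply s4_nec, s4_efq. Qed.

Lemma tr_in_allE a y : Thm (tr (Fq (QImp (QAll a) (substQ y a)))).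
Proof.
  intro G; apply s4_nec; revert G. simpl. rewrite trQ_subst. apply thm_of_der1.
  eapply der_app1; [intro; apply s4_allE | apply der_box_elim; der_assumption].
Qed.

Lemma tr_in_exI a y : Thm (tr (Fq (QImp (substQ y a) (QEx a)))).
Proof. intro; simpl; rewrite trQ_subst; apply s4_nec, s4_exI. Qed.

Lemma tr_in_allI a b :
  Thm (tr (Fq (QImp (QAll (QImp (liftQ b) a)) (QImp b (QAll a))))).
Proof.
  intro G; apply s4_nec; revert G. simpl. rewrite trQ_lift.
  apply thm_box_intro, thm_of_der2.
  apply der_box_mono2 with (X := MAll (MBox (MImp (liftM (trQ b)) (trQ a))))
                           (Y := trQ b); [apply thm_of_der2 | der_assumption |].
  - eapply der_app2; [intro; apply s4_allI | | der_assumption].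
    apply der_all_box_elim. der_assumption.
  - eapply der_app1; [apply trQ_stable | der_assumption].
Qed.

Lemma tr_in_exE a b :
  Thm (tr (Fq (QImp (QAll (QImp a (liftQ b))) (QImp (QEx a) b)))).
Proof.
  intro G; apply s4_nec; revert G. simpl. rewrite trQ_lift. apply thm_of_der1.
  eapply der_box_mono; [apply thm_of_der1 | der_assumption].
  eapply der_app1; [intro; apply s4_exE|].
  apply der_all_box_elim. der_assumption.
Qed.

Lemma tr_x_bangque a : Thm (tr (Fq (QImp a (QBang (PQue a))))).
Proof. intro G; apply s4_nec; revert G. apply trQ_stable. Qed.

Lemma tr_x_bangK p q :
  Thm (tr (Fq (QImp (QBang (PImp p q)) (QImp (QBang p) (QBang q))))).
Proof. intro G; apply s4_nec; revert G. apply thm_box_intro. intro; apply s4_Kbox. Qed.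

Lemma tr_x_bang0 : Thm (tr (Fq (QImp (QBang PFalse) QBot))).
Proof. intro; apply s4_nec, s4_T. Qed.

(* The distribution axioms for ? become tautologies X <-> X. *)
Lemma thm_iff_refl X : Thm (MAnd (MImp X X) (MImp X X)).
Proof.
  apply der_nil_thm.
  eapply der_app2; [intro; apply s4_andI | apply der_thm, thm_imp_refl ..].
Qed.

Theorem theorem3p1 (Gamma : list qform) (A : qform) :
  QHC Gamma A -> QS4 (map tr Gamma) (tr A).
Proof.
  induction 1.
  all: try (first [ apply tr_in_K | apply tr_in_S | apply tr_in_andE1 | apply tr_in_andE2
                  | apply tr_in_andI | apply tr_in_orI1 | apply tr_in_orI2 | apply tr_in_orE
                  | apply tr_in_efq | apply tr_in_allE | apply tr_in_exI | apply tr_in_allI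
                  | apply tr_in_exE | apply tr_x_bangque | apply tr_x_bangK | apply tr_x_bang0
                  | apply thm_iff_refl ]; fail).
  (* classical axioms and the remaining mixed ones are QS4 axiom instances *)
  all: simpl in *; rewrite ?trP_subst, ?trP_lift.
  all: try (constructor; fail).
  - apply s4_hyp, in_map; assumption.
  - eapply s4_mp; eassumption.
  - apply s4_gen; assumption.
  - eapply s4_box_mp; eassumption.
  - apply s4_nec, s4_gen; assumption.
  - apply s4_nec; assumption.
  - assumption.
Qed.
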